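(* In the Ewens setting, let $\Delta W(N,k)=W(N,k+1)-W(N,k)$ for $0\le k\le N-2$. Then for every $k\ge0$: $$\Delta W(k+2,k)=\theta\,(\theta-(k+1))\,[k]_\theta,$$ and for all $N\ge k+3$, $$\Delta W(N,k)=(N-1)\,\Delta W(N-1,k)+\theta^2\,\frac{(N-2)!}{k!}\,[k]_\theta.$$
   Context: Permutations of $\{1,\dots,N\}$ are written in one-line notation; $\mathfrak S_N$ is the set of all of them. An entry $\pi_j$ is a left-to-right maximum if $\pi_j>\pi_i$ for all $i<j$; $\mathrm{lrm}(\pi)$ is the number of left-to-right maxima. Let $\theta>0$. For $0\le k\le N-1$, a permutation $\pi\in\mathfrak S_N$ is $k$-winnable if the first index $j>k$ such that $\pi_j$ is a left-to-right maximum satisfies $\pi_j=N$. Ewens setting: $W(N,k)=\sum_{k\text{-winnable }\pi\in\mathfrak S_N}\theta^{\mathrm{lrm}(\pi)}$, with $W(N,N):=0$, and $[m]_\theta=\theta(\theta+1)\cdots(\theta+m-1)$ with $[0]_\theta=1$. *)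

From HB Require Import structures.
From mathcomp Require Import all_boot all_order all_algebra all_fingroup.
Set Implicit Arguments. Unset Strict Implicit. Unset Printing Implicit Defensive.
Import Order.TTheory GRing.Theory Num.Theory.
Local Open Scope ring_scope.

(* Permutations of {1..N} are encoded as s : 'S_N (permutations of 'I_N = {0..N-1});
   position j (0-based) holds the value s j (0-based).  So the paper's pi_{j+1} = s j + 1. *)

Definition is_lrmax (N : nat) (s : 'S_N) (j : 'I_N) : bool :=
  [forall i : 'I_N, (i < j)%N ==> (s i < s j)%N].

Definition lrm (N : nat) (s : 'S_N) : nat := #|[set j : 'I_N | is_lrmax s j]|.

(* k-winnable: the first (1-based) index j > k (i.e. 0-based j >= k) which is a
   left-to-right maximum carries the maximal value N (0-based value N-1). *)
Definition winnable (N k : nat) (s : 'S_N) : bool :=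
  [exists j : 'I_N,
     [&& (k <= j)%N, is_lrmax s j,
         [forall i : 'I_N, ((k <= i)%N && (i < j)%N) ==> ~~ is_lrmax s i]
       & (nat_of_ord (s j) == N.-1)]].

Definition W (R : numDomainType) (theta : R) (N k : nat) : R :=
  if (k < N)%N then \sum_(s : 'S_N | winnable k s) theta ^+ lrm s else 0.

Definition DW (R : numDomainType) (theta : R) (N k : nat) : R :=
  W theta N k.+1 - W theta N k.

Definition rising (R : numDomainType) (theta : R) (m : nat) : R :=
  \prod_(i < m) (theta + i%:R).

From HB Require Import structures.
From mathcomp Require Import all_boot all_order all_algebra all_fingroup.
Set Implicit Arguments. Unset Strict Implicit. Unset Printing Implicit Defensive.
Import Order.TTheory GRing.Theory Num.Theory.
Local Open Scope ring_scope.
From mathcomp Require Import zify ring.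

(* Every permutation of {0..n} is obtained uniquely as
   [lift_perm ord_max v t]: its last entry is v and its first n entries are in
   the relative order of t : 'S_n.  Appending an entry preserves the
   left-to-right maxima of t and adds one exactly when v is the maximum.
   Hence the last entry is a winning maximum iff v is maximal and t has no
   left-to-right maximum at a position >= k, while a non-maximal last entry
   changes nothing.  Writing Wnone(n,k) for the theta^lrm weight of the
   permutations of 'S_n without left-to-right maximum at a position >= k,
   this yields the first-order recursions
     W(n+1,k) = n W(n,k) + theta Wnone(n,k),   Wnone(n+1,k) = n Wnone(n,k),
   and the Ewens normalisation Wnone(n,n) = [n]_theta gives the closed form
   Wnone(n,k) = [k]_theta * k (k+1) ... (n-1).  Subtracting the recursions for
   k and k+1 gives DW(n+1,k) = n DW(n,k) + theta^2 [k]_theta (n-1)!/k!, and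
   DW(k+1,k) = -theta [k]_theta starts it: both claims follow. *)

Lemma ltn_bump2 h i j : (bump h i < bump h j)%N = (i < j)%N.
Proof. by rewrite !ltnNge leq_bump2. Qed.

Lemma bump_eq_pred h x m :
  (h < m)%N -> (x < m)%N -> (bump h x == m) = (x == m.-1).
Proof. by rewrite /bump; case: leqP => hx hm xm; apply/eqP/eqP; lia. Qed.

Definition no_lrmax_from n k (s : 'S_n) : bool :=
  [forall p : 'I_n, (k <= p)%N ==> ~~ is_lrmax s p].

Section LastEntry.
Variable n : nat.
Implicit Types (v : 'I_n.+1) (t : 'S_n) (p : 'I_n).

Lemma neq_max_lt v : v != ord_max -> (v < n)%N.
Proof. by move: (ltn_ord v); rewrite -val_eqE /=; lia. Qed.

Lemma lrmax_lift v t p :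
  is_lrmax (lift_perm ord_max v t) (lift ord_max p) = is_lrmax t p.
Proof.
apply/forallP/forallP => lr i.
  by have := lr (lift ord_max i); rewrite !lift_perm_lift /= !ltn_bump2.
case: (unliftP ord_max i) => [i'|] ->.
  by rewrite !lift_perm_lift /= !ltn_bump2; apply: lr.
by rewrite (lift_max p) ltnNge ltnW.
Qed.

Lemma lrmax_last v t : is_lrmax (lift_perm ord_max v t) ord_max = (v == ord_max).
Proof.
case: eqVneq => [-> | vmax].
  apply/forallP => i; case: (unliftP ord_max i) => [i'|] ->; last by rewrite ltnn.
  by rewrite lift_perm_lift lift_perm_id (lift_max i') (lift_max (t i')) !ltn_ord.
have vn := neq_max_lt vmax.
apply/forallP => /(_ (lift ord_max (t^-1 (Ordinal vn)))%g).
rewrite lift_perm_lift lift_perm_id permKV (lift_max (t^-1 (Ordinal vn))%g) ltn_ord.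
by rewrite /= /bump leqnn add1n ltnNge leqnSn.
Qed.

Lemma lrm_lift v t : lrm (lift_perm ord_max v t) = (lrm t + (v == ord_max))%N.
Proof.
rewrite /lrm -!sum1_card !big_mkcond (bigD1_ord ord_max) //= in_set lrmax_last addnC.
congr (_ + _); rewrite [RHS]big_mkcond; apply: eq_bigr => p _.
by rewrite !in_set lrmax_lift.
Qed.

(* For k <= n the last position counts, so it must not be a maximum. *)
Lemma no_lrmax_from_lift k v t : (k <= n)%N ->
  no_lrmax_from k (lift_perm ord_max v t) = (v != ord_max) && no_lrmax_from k t.
Proof.
move=> kn; apply/forallP/andP => [nolr | [vmax nolr] i].
  split; first by have := nolr ord_max; rewrite lrmax_last /= kn.
  by apply/forallP => p; have := nolr (lift ord_max p); rewrite lrmax_lift (lift_max p).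
case: (unliftP ord_max i) => [p|] ->; last by rewrite lrmax_last vmax implybT.
by rewrite lrmax_lift (lift_max p); apply: (forallP nolr).
Qed.

Lemma winnable_last k t : (k <= n)%N ->
  winnable k (lift_perm ord_max ord_max t) = no_lrmax_from k t.
Proof.
move=> kn; apply/existsP/forallP => [[j /and4P [_ _ before top]] p | nolr].
  case: (unliftP ord_max j) before top => [j'|] -> before top.
    by move: top; rewrite lift_perm_lift (lift_max (t j')) /= ltn_eqF.
  apply/implyP => kp; have := forallP before (lift ord_max p).
  by rewrite (lift_max p) kp ltn_ord lrmax_lift.
exists ord_max; rewrite /= kn lrmax_last lift_perm_id !eqxx /= andbT.
apply/forallP => i; case: (unliftP ord_max i) => [p|] ->; last by rewrite ltnn andbF.
by rewrite (lift_max p) lrmax_lift; apply/implyP => /andP [kp _]; apply: (implyP (nolr p)).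
Qed.

Lemma winnable_other k v t : v != ord_max ->
  winnable k (lift_perm ord_max v t) = winnable k t.
Proof.
move=> /neq_max_lt vn.
have top p : (lift_perm ord_max v t (lift ord_max p) == n :> nat) = (t p == n.-1 :> nat).
  by rewrite lift_perm_lift /= bump_eq_pred.
apply/existsP/existsP => [[j /and4P [kj lrj before topj]] | [j /and4P [kj lrj before topj]]].
  case: (unliftP ord_max j) kj lrj before topj => [j'|] -> kj lrj before topj; last first.
    by move: topj; rewrite lift_perm_id /= ltn_eqF.
  exists j'; move: kj lrj topj; rewrite (lift_max j') lrmax_lift top => -> -> -> /=.
  rewrite andbT; apply/forallP => i; have := forallP before (lift ord_max i).
  by rewrite !(lift_max i) (lift_max j') lrmax_lift.
exists (lift ord_max j); rewrite (lift_max j) lrmax_lift kj lrj top topj andbT /=.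
apply/forallP => i; case: (unliftP ord_max i) => [p|] ->.
  by rewrite (lift_max p) lrmax_lift; apply: (forallP before p).
by rewrite [(_ < j)%N]ltnNge (ltnW (ltn_ord j)) andbF.
Qed.
End LastEntry.

Lemma lift_perm_max_inj n :
  injective (fun vt : 'I_n.+1 * 'S_n => lift_perm ord_max vt.1 vt.2).
Proof.
move=> [v t] [v' t'] /= eq_lift.
have eq_v : v' = v by rewrite -(lift_perm_id ord_max v' t') -eq_lift lift_perm_id.
subst v'; congr (_, _); apply/permP => p; apply: (@lift_inj _ v).
by rewrite -!(lift_perm_lift ord_max) eq_lift.
Qed.

Lemma sum_perm_last (V : nmodType) n (F : 'S_n.+1 -> V) :
  \sum_(s : 'S_n.+1) F s = \sum_(v : 'I_n.+1) \sum_(t : 'S_n) F (lift_perm ord_max v t).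
Proof.
have lift_bij : bijective (fun vt : 'I_n.+1 * 'S_n => lift_perm ord_max vt.1 vt.2).
  by apply: inj_card_bij (@lift_perm_max_inj n) _; rewrite card_prod !card_Sn card_ord.
by rewrite pair_big (reindex _ (onW_bij _ lift_bij)); apply: eq_bigl.
Qed.

Section EwensWeights.
Variables (R : numDomainType) (theta : R).

Definition Wnone n k : R := \sum_(s : 'S_n | no_lrmax_from k s) theta ^+ lrm s.

(* The convention W(n,n) = 0 agrees with the sum, which is empty for n <= k. *)
Lemma W_sum n k : W theta n k = \sum_(s : 'S_n | winnable k s) theta ^+ lrm s.
Proof.
rewrite /W; case: ltnP => // nk; rewrite big_pred0 // => s.
by apply/existsP => -[j /andP [kj _]]; move: (ltn_ord j); lia.
Qed.

Lemma sum_over_last_entry n (G : 'I_n.+1 -> R) (x : R) :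
  (forall v, v != ord_max -> G v = x) -> \sum_(v : 'I_n.+1) G v = n%:R * x + G ord_max.
Proof.
move=> Gx; rewrite (bigD1 ord_max) //= addrC (eq_bigr (fun _ => x)) //.
by rewrite sumr_const cardC1 card_ord mulr_natl.
Qed.

Lemma W_rec n k : (k <= n)%N ->
  W theta n.+1 k = n%:R * W theta n k + theta * Wnone n k.
Proof.
move=> kn; rewrite W_sum big_mkcond sum_perm_last (sum_over_last_entry (x := W theta n k)).
  congr (_ + _); rewrite /Wnone big_distrr [RHS]big_mkcond; apply: eq_bigr => t _.
  by rewrite winnable_last // lrm_lift eqxx addn1 exprS; case: ifP; rewrite ?mulr0.
move=> v vmax; rewrite W_sum [RHS]big_mkcond; apply: eq_bigr => t _.
by rewrite winnable_other // lrm_lift (negbTE vmax) addn0.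
Qed.

(* Recursion for Wnone: the last entry must not be the maximum. *)
Lemma Wnone_rec n k : (k <= n)%N -> Wnone n.+1 k = n%:R * Wnone n k.
Proof.
move=> kn; rewrite /Wnone big_mkcond sum_perm_last (sum_over_last_entry (x := Wnone n k)).
  by rewrite big1 ?addr0 // => t _; rewrite no_lrmax_from_lift // eqxx.
move=> v vmax; rewrite /Wnone [RHS]big_mkcond; apply: eq_bigr => t _.
by rewrite no_lrmax_from_lift // vmax lrm_lift (negbTE vmax) addn0.
Qed.

Lemma rising_S k : rising theta k.+1 = rising theta k * (theta + k%:R).
Proof. by rewrite /rising big_ord_recr. Qed.

Lemma ewens_total n : \sum_(s : 'S_n) theta ^+ lrm s = rising theta n.
Proof.
elim: n => [|n IH].
  rewrite /rising big_ord0 (eq_bigr (fun _ => 1)) ?sumr_const ?card_Sn // => s _.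
  by rewrite /lrm (@eq_card0 _ [set j | is_lrmax s j]) // => -[].
rewrite sum_perm_last (sum_over_last_entry (x := rising theta n)).
  rewrite rising_S (eq_bigr (fun t => theta * theta ^+ lrm t)) -?big_distrr /= ?IH.
    by ring.
  by move=> t _; rewrite lrm_lift eqxx addn1 exprS.
move=> v vmax; rewrite -IH; apply: eq_bigr => t _.
by rewrite lrm_lift (negbTE vmax) addn0.
Qed.

(* For k = n the condition on positions >= n is void. *)
Lemma Wnone_diag n : Wnone n n = rising theta n.
Proof.
rewrite -ewens_total; apply: eq_bigl => s.
by apply/forallP => p; rewrite leqNgt ltn_ord.
Qed.

Lemma Wnone_closed n k : (k <= n)%N ->
  Wnone n k = rising theta k * \prod_(k <= i < n) i%:R.
Proof.
move=> /subnKC <-; elim: (n - k)%N => [|d IH].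
  by rewrite addn0 Wnone_diag big_geq ?mulr1.
by rewrite addnS Wnone_rec ?leq_addr // IH big_nat_recr ?leq_addr //=; ring.
Qed.

Lemma DW_rec n k : (k < n)%N ->
  DW theta n.+1 k
  = n%:R * DW theta n k + theta ^+ 2 * rising theta k * \prod_(k.+1 <= i < n) i%:R.
Proof.
move=> kn; rewrite /DW (W_rec kn) (W_rec (ltnW kn)).
by rewrite (Wnone_closed kn) (Wnone_closed (ltnW kn)) (big_ltn kn) rising_S; ring.
Qed.

(* Initial value: W(k+1,k+1) = 0 and W(k+1,k) = theta [k]_theta. *)
Lemma DW_diag k : DW theta k.+1 k = - (theta * rising theta k).
Proof.
by rewrite /DW (W_rec (leqnn k)) Wnone_diag /W !ltnn mulr0 !add0r.
Qed.
End EwensWeights.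

Theorem corollary4p4 (R : realFieldType) (theta : R) (htheta : 0 < theta) (k : nat) :
  DW theta k.+2 k = theta * (theta - k.+1%:R) * rising theta k /\
  (forall N : nat, (k + 3 <= N)%N ->
     DW theta N k =
       (N.-1)%:R * DW theta N.-1 k
       + theta ^+ 2 * ((N - 2)`!%:R / k`!%:R) * rising theta k).
Proof.
split; first by rewrite (DW_rec _ (ltnSn k)) DW_diag big_geq // mulr1; ring.
case=> [|n]; rewrite addn3 // ltnS => kn.
have fact_ratio : (n.+1 - 2)`!%:R / k`!%:R = \prod_(k.+1 <= i < n) i%:R :> R.
  have [n_pos k_le] : (0 < n)%N /\ (k <= n.-1)%N by lia.
  rewrite subSS subn1 (fact_split k_le) prednK //.
  by rewrite natrM natr_prod mulrAC divff ?mul1r // pnatr_eq0 -lt0n fact_gt0.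
by rewrite (DW_rec _ (ltnW kn)) fact_ratio /=; ring.
Qed.
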